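(* Let $M=(X,(\leq_k)_{k=1,\dots,n})$ be a multichain with components $C_k=(X,\leq_k)$, let $L:=\prod_{k=1}^n C_k$, let $\delta:X\to L$ be the diagonal map $\delta(x)=(x,\dots,x)$, let $\Delta(L)$ be the join-subsemilattice of $L$ generated by $\delta(X)$, and let $\hat\Delta(L)$ be $\Delta(L)$ with a new least element added. Then the join-semilattice $K(C(M))$ of compact elements of $C(M)$ is isomorphic to $\hat\Delta(L)$ via a join-preserving map.
   Context: A multichain is a set $X$ with finitely many linear orders $\leq_1,\dots,\leq_n$. $C(M)$ is the closure system on $X$ whose closed sets are the sets $\bigcap_{k=1}^n I_k$ with $I_k$ an initial segment of $(X,\leq_k)$, ordered by inclusion; its compact elements are the closures of finite subsets of $X$. $L$ carries the componentwise order. *)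

From mathcomp Require Import all_boot.
From Stdlib Require Import List.
Set Implicit Arguments. Unset Strict Implicit. Unset Printing Implicit Defensive.

Section Multichain.
Variables (X : Type) (n : nat) (le : 'I_n -> X -> X -> Prop).

Definition linear_order (R : X -> X -> Prop) : Prop :=
  (forall x, R x x) /\ (forall x y, R x y -> R y x -> x = y) /\
  (forall x y z, R x y -> R y z -> R x z) /\ (forall x y, R x y \/ R y x).

Definition multichain : Prop := forall k, linear_order (le k).

Definition initial_segment (R : X -> X -> Prop) (I : X -> Prop) : Prop :=
  forall x y, I y -> R x y -> I x.

Definition closed_set (A : X -> Prop) : Prop :=
  exists I : 'I_n -> X -> Prop,
    (forall k, initial_segment (le k) (I k)) /\ (forall x, A x <-> forall k, I k x).

Definition closure (A : X -> Prop) : X -> Prop :=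
  fun x => forall B, closed_set B -> (forall y, A y -> B y) -> B x.

Definition compact (A : X -> Prop) : Prop :=
  exists s : list X, A = closure (fun y => In y s).

Definition KCM := {A : X -> Prop | compact A}.

Definition leK (A B : KCM) : Prop := forall x, proj1_sig A x -> proj1_sig B x.

Definition leL (a b : 'I_n -> X) : Prop := forall k, le k (a k) (b k).

Definition delta (x : X) : 'I_n -> X := fun _ => x.

Definition is_join (T : Type) (R : T -> T -> Prop) (a b c : T) : Prop :=
  R a c /\ R b c /\ (forall d, R a d -> R b d -> R c d).

Inductive in_Delta : ('I_n -> X) -> Prop :=
| Delta_gen x : in_Delta (delta x)
| Delta_join a b c : in_Delta a -> in_Delta b -> is_join leL a b c -> in_Delta c.

Definition DeltaL := {t : 'I_n -> X | in_Delta t}.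

Definition DeltaHat := option DeltaL.

Definition leDH (u v : DeltaHat) : Prop :=
  match u, v with
  | None, _ => True
  | Some _, None => False
  | Some a, Some b => leL (proj1_sig a) (proj1_sig b)
  end.

End Multichain.

(** The closure of a finite set [s] in C(M) is [{x | forall k, exists y in s, x <=_k y}].
    For nonempty [s] this is the set of [x] with [delta x <= t], where [t] is the
    coordinatewise maximum of [s] in L; these maxima are exactly the elements of
    Delta(L), and the empty set corresponds to the added least element.  Since
    Delta(L) is generated by the diagonal, [t] is determined by the [x] with
    [delta x <= t], so the correspondence is an order isomorphism, and order
    isomorphisms preserve joins. *)

From Stdlib Require Import List ClassicalEpsilon FunctionalExtensionality
  PropExtensionality ProofIrrelevance.
From Pilot Require Import Defs.
From mathcomp Require Import all_boot.

Set Implicit Arguments. Unset Strict Implicit. Unset Printing Implicit Defensive.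

Lemma inj_surj_cancel (S T : Type) (g : T -> S) :
  injective g -> (forall s, exists t, g t = s) ->
  exists f : S -> T, cancel f g /\ cancel g f.
Proof.
move=> g_inj g_surj.
pose f s := proj1_sig (constructive_indefinite_description _ (g_surj s)).
have fK : cancel f g.
  by move=> s; exact: proj2_sig (constructive_indefinite_description _ (g_surj s)).
by exists f; split=> // t; apply: g_inj; rewrite fK.
Qed.

Lemma order_iso_is_join (S T : Type) (R : S -> S -> Prop) (R' : T -> T -> Prop)
    (f : S -> T) :
  (forall y, exists x, f x = y) -> (forall a b, R a b <-> R' (f a) (f b)) ->
  forall a b c, is_join R a b c -> is_join R' (f a) (f b) (f c).
Proof.
move=> f_surj f_mono a b c [ac [bc c_least]]; split; [|split]; try exact/f_mono.
by move=> y; have [d <-] := f_surj y => /f_mono ad /f_mono bd; apply/f_mono/c_least.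
Qed.

Lemma is_join_sym (T : Type) (R : T -> T -> Prop) a b c :
  is_join R a b c -> is_join R b a c.
Proof. by case=> ac [bc c_least]; do 2!split=> //; move=> d bd ad; exact: c_least. Qed.

Section Multichain.
Variables (X : Type) (n : nat) (le : 'I_n -> X -> X -> Prop).
Hypothesis chainM : multichain le.

Lemma chain_refl k x : le k x x.
Proof. by case: (chainM k). Qed.

Lemma chain_anti k x y : le k x y -> le k y x -> x = y.
Proof. by case: (chainM k) => _ [anti _]; apply: anti. Qed.

Lemma chain_trans k x y z : le k x y -> le k y z -> le k x z.
Proof. by case: (chainM k) => _ [_ [trans _]]; apply: trans. Qed.

Lemma chain_total k x y : le k x y \/ le k y x.
Proof. by case: (chainM k) => _ [_ [_ total]]. Qed.

(* Compare [c] with the tuple that agrees with [c] except at [k], where it is [b k]. *)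
Lemma joinL_coord_le a b c k :
  is_join (leL le) a b c -> le k (a k) (b k) -> c k = b k.
Proof.
move=> [ac [bc c_least]] ab_k.
pose d j := if j == k then b k else c j.
have /(_ k) : leL le c d.
  by apply: c_least => j; rewrite /d; case: eqP => [->|_] //; exact: chain_refl.
by rewrite /d eqxx => cb_k; exact: chain_anti cb_k (bc k).
Qed.

Lemma joinL_coord a b c k :
  is_join (leL le) a b c -> c k = a k \/ c k = b k.
Proof.
move=> abc; case: (chain_total k (a k) (b k)) => ab_k.
- by right; exact: joinL_coord_le abc ab_k.
- by left; exact: joinL_coord_le (is_join_sym abc) ab_k.
Qed.

Lemma joinL_exists a b : exists c, is_join (leL le) a b c.
Proof.
exists (fun k => if excluded_middle_informative (le k (a k) (b k)) then b k else a k).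
split; [|split] => [k|k|d ad bd k]; case: excluded_middle_informative => // ab_k.
- exact: chain_refl.
- exact: chain_refl.
- by case: (chain_total k (a k) (b k)).
Qed.

Definition coord_max (s : seq X) (t : 'I_n -> X) : Prop :=
  (forall y, In y s -> leL le (delta y) t) /\
  (forall k, exists2 y, In y s & le k (t k) y).

Lemma coord_max_join y s b c :
  coord_max s b -> is_join (leL le) (delta y) b c -> coord_max (y :: s) c.
Proof.
move=> [sb b_max] ybc; have [yc [bc _]] := ybc; split.
- by move=> z [<-|zs] k; [exact: yc | exact: chain_trans (sb z zs k) (bc k)].
- move=> k; case: (joinL_coord k ybc) => ->.
  + by exists y; [left | exact: chain_refl].
  + by have [z zs bz] := b_max k; exists z => //; right.
Qed.

Lemma coord_max_delta x : coord_max [:: x] (delta x).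
Proof.
split=> [y [<-|[]] k|k]; first exact: chain_refl.
by exists x; [left | exact: chain_refl].
Qed.

Lemma in_Delta_coord_max t : in_Delta le t -> exists s, coord_max s t.
Proof.
elim=> [x|a b c _ [sa [sa_a a_max]] _ [sb [sb_b b_max]] abc].
  by exists [:: x]; exact: coord_max_delta.
have [ac [bc _]] := abc; exists (sa ++ sb)%list; split.
- move=> y /(in_app_or sa sb y) [ys|ys] k.
  + exact: chain_trans (sa_a y ys k) (ac k).
  + exact: chain_trans (sb_b y ys k) (bc k).
- move=> k; case: (joinL_coord k abc) => ->.
  + by have [y ys ay] := a_max k; exists y => //; apply: in_or_app; left.
  + by have [y ys by'] := b_max k; exists y => //; apply: in_or_app; right.
Qed.

Lemma coord_max_in_Delta y s : exists2 t, in_Delta le t & coord_max (y :: s) t.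
Proof.
elim: s y => [|z s IHs] y; first by exists (delta y); [exact: Delta_gen | exact: coord_max_delta].
have [b b_Delta b_max] := IHs z; have [c abc] := joinL_exists (delta y) b.
exists c; first exact: Delta_join (Delta_gen le y) b_Delta abc.
exact: coord_max_join b_max abc.
Qed.

Lemma closure_seqE (s : seq X) x :
  Defs.closure le (fun y => In y s) x <-> forall k, exists2 y, In y s & le k x y.
Proof.
split.
- move=> /(_ (fun x => forall k, exists2 y, In y s & le k x y)); apply;
    last by move=> y ys k; exists y => //; exact: chain_refl.
  exists (fun k x => exists2 y, In y s & le k x y); split=> // k z w [y ys wy] zw.
  by exists y => //; exact: chain_trans zw wy.
- move=> x_below B [I [I_init B_I]] sB; apply/B_I => k.
  have [y ys xy] := x_below k.
  exact: I_init k x y (proj1 (B_I y) (sB y ys) k) xy.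
Qed.

Lemma coord_max_below s t x :
  coord_max s t -> (forall k, exists2 y, In y s & le k x y) <-> leL le (delta x) t.
Proof.
move=> [st t_max]; split=> [x_below k|xt k].
- by have [y ys xy] := x_below k; exact: chain_trans xy (st y ys k).
- by have [y ys ty] := t_max k; exists y => //; exact: chain_trans (xt k) ty.
Qed.

Lemma closure_coord_max s t :
  coord_max s t -> Defs.closure le (fun y => In y s) = fun x => leL le (delta x) t.
Proof.
move=> t_max; apply: functional_extensionality => x.
apply: propositional_extensionality.
exact: iff_trans (closure_seqE s x) (coord_max_below x t_max).
Qed.

Lemma Delta_le_down a b :
  in_Delta le a -> (forall x, leL le (delta x) a -> leL le (delta x) b) -> leL le a b.
Proof.
move=> /in_Delta_coord_max [s [sa a_max]] down_ab k.
by have [y ys ay] := a_max k; exact: chain_trans ay (down_ab y (sa y ys) k).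
Qed.

Hypothesis n_gt0 : 0 < n.

Lemma closure_nil : Defs.closure le (fun y => In y [::]) = fun _ => False.
Proof.
apply: functional_extensionality => x; apply: propositional_extensionality.
by split=> // /closure_seqE /(_ (Ordinal n_gt0)) [y []].
Qed.

Lemma in_Delta_down_nonempty t : in_Delta le t -> exists x, leL le (delta x) t.
Proof.
move=> /in_Delta_coord_max [s [st t_max]].
by have [y ys _] := t_max (Ordinal n_gt0); exists y; exact: st.
Qed.

Definition down (u : DeltaHat le) : X -> Prop :=
  if u is Some t then fun x => leL le (delta x) (proj1_sig t) else fun _ => False.

Lemma down_closure (u : DeltaHat le) : exists s, down u = Defs.closure le (fun y => In y s).
Proof.
case: u => [[t t_Delta]|]; last by exists [::]; rewrite closure_nil.
have [s t_max] := in_Delta_coord_max t_Delta.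
by exists s; rewrite (closure_coord_max t_max).
Qed.

Lemma compact_down A : compact le A -> exists u, A = down u.
Proof.
move=> [[|y s] ->]; first by exists None; rewrite closure_nil.
have [t t_Delta t_max] := coord_max_in_Delta y s.
by exists (Some (exist _ t t_Delta)); rewrite (closure_coord_max t_max).
Qed.

Lemma leDH_anti (u v : DeltaHat le) : leDH u v -> leDH v u -> u = v.
Proof.
case: u v => [[a a_Delta]|] [[b b_Delta]|] //= ab ba.
have eq_ab : a = b.
  by apply: functional_extensionality => k; exact: chain_anti (ab k) (ba k).
by subst b; rewrite (proof_irrelevance _ a_Delta b_Delta).
Qed.

Definition down_KCM (u : DeltaHat le) : KCM le :=
  exist _ (down u) (down_closure u).

Lemma down_KCM_le (u v : DeltaHat le) : leK (down_KCM u) (down_KCM v) <-> leDH u v.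
Proof.
case: u v => [[a a_Delta]|] [[b b_Delta]|]; rewrite /leK /=; split=> //.
- exact: Delta_le_down.
- by move=> ab x xa k; exact: chain_trans (xa k) (ab k).
- by have [x xa] := in_Delta_down_nonempty a_Delta => /(_ x xa).
Qed.

Lemma down_KCM_inj : injective down_KCM.
Proof.
by move=> u v uv; apply: leDH_anti; apply/down_KCM_le; rewrite uv.
Qed.

Lemma down_KCM_surj A : exists u, down_KCM u = A.
Proof.
case: A => A A_compact; have [u A_down] := compact_down A_compact.
exists u; subst A; congr exist; exact: proof_irrelevance.
Qed.

End Multichain.

Theorem theorem7p14 (X : Type) (n : nat) (le : 'I_n -> X -> X -> Prop) :
  0 < n -> multichain le ->
  exists f : KCM le -> DeltaHat le,
    bijective f /\
    (forall A B, leK A B <-> leDH (f A) (f B)) /\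
    (forall A B C, is_join (@leK _ _ le) A B C ->
                   is_join (@leDH _ _ le) (f A) (f B) (f C)).
Proof.
move=> n_gt0 chainM; pose g := down_KCM chainM n_gt0.
have [f [fK gK]] := inj_surj_cancel (@down_KCM_inj _ _ _ chainM n_gt0)
  (@down_KCM_surj _ _ _ chainM n_gt0).
have f_mono A B : leK A B <-> leDH (f A) (f B).
  by have := @down_KCM_le _ _ _ chainM n_gt0 (f A) (f B); rewrite !fK.
exists f; split; first by exists g.
by split=> //; apply: order_iso_is_join f_mono => u; exists (g u).
Qed.
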